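(* Let $n\ge 4$ and let $x$ be a vertex of the path $P_n$ which is not a bad vertex (i.e. it is not the case that $n=5$ and $x$ is the middle vertex of $P_5$). Then there exists a $(P_n,x)$-good path 2-placement.
   Context: $P_n$ is the path on $n$ vertices; $dist$ is distance in $P_n$, $d(y)$ the degree of $y$ in $P_n$, $N(x)$ the set of neighbors of $x$. A permutation $\sigma$ of $V(P_n)$ is a 2-placement of $P_n$ if for every edge $ab$ of $P_n$, $\sigma(a)\sigma(b)$ is not an edge of $P_n$. $P_n^k$ is the $k$-th power of $P_n$; $\sigma(P_n)\subseteq P_n^k$ means $dist(\sigma(a),\sigma(b))\le k$ for every edge $ab$ of $P_n$. A fixed-point-free permutation $\sigma$ of $V(P_n)$ is a $(P_n,x)$-good path 2-placement if: (1) $\sigma$ is a 2-placement of $P_n$; (2) $\sigma(P_n)\subseteq P_n^5$; (3) $dist(x,\sigma(x))=1$; (4) $dist(y,\sigma(y))\le 2$ for every $y\in N(x)$ and for every $y$ with $d(y)=1$. *)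

(* Path P_n on vertex set 'I_n, vertices 0..n-1, edges {i,i+1}. *)
From mathcomp Require Import all_boot all_order all_fingroup.
Set Implicit Arguments. Unset Strict Implicit. Unset Printing Implicit Defensive.

Definition pdist n (a b : 'I_n) : nat := ((a : nat) - b) + ((b : nat) - a).
Definition padj n (a b : 'I_n) : bool := pdist a b == 1.
Definition pdeg n (y : 'I_n) : nat := #|[set z : 'I_n | padj y z]|.

Definition two_placement n (s : {perm 'I_n}) : Prop :=
  forall a b : 'I_n, padj a b -> ~~ padj (s a) (s b).

(* sigma(P_n) is a subgraph of P_n^k *)
Definition in_power n (k : nat) (s : {perm 'I_n}) : Prop :=
  forall a b : 'I_n, padj a b -> pdist (s a) (s b) <= k.

Definition fixed_point_free n (s : {perm 'I_n}) : Prop :=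
  forall a : 'I_n, s a != a.

Definition good_path_2placement n (x : 'I_n) (s : {perm 'I_n}) : Prop :=
  [/\ fixed_point_free s,
      two_placement s,
      in_power 5 s,
      pdist x (s x) = 1 &
      forall y : 'I_n, (padj x y || (pdeg y == 1)) -> pdist y (s y) <= 2].

Definition bad_vertex n (x : 'I_n) : Prop := n = 5 /\ (x : nat) = 2.

From mathcomp Require Import all_boot all_order all_fingroup.
From mathcomp Require Import zify.
Set Implicit Arguments. Unset Strict Implicit. Unset Printing Implicit Defensive.

(* We work with functions f : nat -> nat on the vertices 0..n-1 rather than
   with permutations of 'I_n.  A [placement] of P_n is an injective,
   fixed-point-free map sending each edge to a pair at distance other than 1
   and at most 5, and moving both end vertices by at most 2;
   it is [anchored] at x when x moves by exactly 1 and the neighbours of x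
   move by at most 2.  The key observation is that placements can be
   concatenated: running f on 0..n-1 and a shifted copy of g on n..n+m-1
   again gives a placement, because end vertices move little, and the anchor
   of either block survives.  Hence for n >= 8 an anchored placement of P_n
   is glued from a block of size 4 and a placement of P_(n-4), the block
   containing x being anchored; the bad pair (n, x) = (5, 2) being avoided by putting the 4-block on the side
   of x whenever x lies within distance 4 of an end.  The cases 4 <= n < 8
   come from an explicit table checked by computation. *)

Definition ndist (a b : nat) : nat := (a - b) + (b - a).

Record placement (n : nat) (f : nat -> nat) : Prop := Placement {
  placement_range : forall i, i < n -> f i < n;
  placement_inj : forall i j, i < n -> j < n -> f i = f j -> i = j;
  placement_fpf : forall i, i < n -> f i <> i;
  placement_edge : forall i, i.+1 < n ->
    ndist (f i) (f i.+1) <> 1 /\ ndist (f i) (f i.+1) <= 5;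
  placement_first : ndist 0 (f 0) <= 2;
  placement_last : ndist n.-1 (f n.-1) <= 2 }.

Record anchored (n x : nat) (f : nat -> nat) : Prop := Anchored {
  anchor_lt : x < n;
  anchor_moved : ndist x (f x) = 1;
  anchor_nbrs : forall y, y < n -> ndist x y = 1 -> ndist y (f y) <= 2 }.

Definition catf (n : nat) (f g : nat -> nat) (i : nat) : nat :=
  if i < n then f i else n + g (i - n).

(* The edge joining the blocks goes from f (n-1) in {n-3, n-2} to
   n + g 0 in {n+1, n+2}, so its image has length between 3 and 5. *)
Lemma cat_placement n m f g :
  0 < n -> 0 < m -> placement n f -> placement m g -> placement (n + m) (catf n f g).
Proof.
move=> n0 m0 [f1 f2 f3 f4 f5 f6] [g1 g2 g3 g4 g5 g6]; rewrite /ndist in f4 f5 f6 g4 g5 g6.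
split => [i Hi|i j Hi Hj|i Hi|i Hi||]; rewrite /catf; unfold ndist.
- case: (ltnP i n) => H; first by have := f1 i H; lia.
  by have := g1 (i - n); lia.
- case: (ltnP i n) => H1; case: (ltnP j n) => H2 E.
  + exact: f2.
  + by have := f1 i H1; lia.
  + by have := f1 j H2; lia.
  + have : i - n = j - n by apply: g2; lia.
    lia.
- case: (ltnP i n) => H; first exact: f3.
  by have := g3 (i - n); lia.
- case: (ltnP i.+1 n) => H1; first by rewrite (ltnW H1); exact: f4.
  case: (ltnP i n) => H2.
  + have Ei : i = n.-1 by lia.
    have -> : i.+1 - n = 0 by lia.
    rewrite Ei in H2 *.
    have := f1 _ H2; have := f3 _ H2; have := g3 0 m0.
    lia.
  + have -> : i.+1 - n = (i - n).+1 by lia.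
    by have := g4 (i - n); lia.
- by rewrite n0.
- have -> : (n + m).-1 < n = false by lia.
  have -> : (n + m).-1 - n = m.-1 by lia.
  lia.
Qed.

(* An anchor in the left block survives concatenation: its possible right
   neighbour n is sent to n + g 0, at distance 1 or 2. *)
Lemma cat_anchored_l n m f g x :
  0 < m -> placement m g -> anchored n x f -> anchored (n + m) x (catf n f g).
Proof.
move=> m0 [_ _ g3 _ g5 _] [x_lt f_x f_nbrs]; rewrite /catf.
split => [|| y Hy Hxy]; first by lia.
- by rewrite x_lt.
- case: (ltnP y n) => H; first exact: f_nbrs.
  have -> : y - n = 0 by move: Hxy; rewrite /ndist; lia.
  by move: Hxy g5; have := g3 0 m0; rewrite /ndist; lia.
Qed.

Lemma cat_anchored_r n m f g x :
  0 < n -> placement n f -> anchored m x g -> anchored (n + m) (n + x) (catf n f g).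
Proof.
move=> n0 [f1 _ f3 _ _ f6] [x_lt g_x g_nbrs]; rewrite /catf.
split => [|| y Hy Hxy]; first by lia.
- by rewrite ltnNge leq_addr /= addKn; move: g_x; rewrite /ndist; lia.
- case: (ltnP y n) => H.
  + have Ey : y = n.-1 by move: Hxy; rewrite /ndist; lia.
    rewrite Ey in H *.
    by move: f6; have := f1 _ H; have := f3 _ H; rewrite /ndist; lia.
  + by have := g_nbrs (y - n); move: Hxy; rewrite /ndist; lia.
Qed.

Definition placementb (n : nat) (f : nat -> nat) : bool :=
  [&& all (fun i => f i < n) (iota 0 n), uniq (map f (iota 0 n)),
      all (fun i => f i != i) (iota 0 n),
      all (fun i => (ndist (f i) (f i.+1) != 1) && (ndist (f i) (f i.+1) <= 5))
          (iota 0 n.-1),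
      ndist 0 (f 0) <= 2 & ndist n.-1 (f n.-1) <= 2].

Definition anchoredb (n x : nat) (f : nat -> nat) : bool :=
  [&& x < n, ndist x (f x) == 1 &
      all (fun y => (ndist x y == 1) ==> (ndist y (f y) <= 2)) (iota 0 n)].

Lemma placementbP n f : placementb n f -> placement n f.
Proof.
case/and5P=> /allP f_range f_uniq /allP f_fpf /allP f_edge /andP[f_first f_last].
split => // [i Hi|i j Hi Hj fij|i Hi|i Hi].
- by apply: f_range; rewrite mem_iota.
- have := nth_uniq 0 _ _ f_uniq; rewrite size_map size_iota => /(_ i j Hi Hj).
  by rewrite !(nth_map 0) ?size_iota // !nth_iota // fij eqxx => /esym/eqP.
- by apply/eqP; apply: f_fpf; rewrite mem_iota.
- have i_lt : i \in iota 0 n.-1 by rewrite mem_iota; lia.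
  by have /andP[/eqP ? ?] := f_edge i i_lt.
Qed.

Lemma anchoredbP n x f : anchoredb n x f -> anchored n x f.
Proof.
case/and3P=> x_lt /eqP f_x /allP f_nbrs; split => // y Hy Hxy.
by have := f_nbrs y; rewrite mem_iota Hy Hxy eqxx => /(_ isT).
Qed.

(* Anchored placements of P_n for 4 <= n < 8, as the list f 0, ..., f (n-1). *)
Definition small_placement (n x : nat) : seq nat :=
  match n, x with
  | 4, 0 | 4, 3 => [:: 1; 3; 0; 2]
  | 4, _ => [:: 2; 0; 3; 1]
  | 5, 0 | 5, 3 => [:: 1; 3; 0; 4; 2]
  | 5, _ => [:: 2; 0; 4; 1; 3]
  | 6, 0 | 6, 5 => [:: 1; 3; 0; 5; 2; 4]
  | 6, 1 | 6, 2 => [:: 2; 0; 3; 5; 1; 4]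
  | 6, _ => [:: 1; 4; 0; 2; 5; 3]
  | 7, 0 | 7, 3 => [:: 1; 3; 0; 4; 6; 2; 5]
  | 7, 1 | 7, 2 => [:: 2; 0; 3; 5; 1; 6; 4]
  | 7, 4 => [:: 2; 0; 5; 1; 3; 6; 4]
  | 7, 5 => [:: 1; 3; 0; 5; 2; 6; 4]
  | _, _ => [:: 1; 4; 0; 2; 6; 3; 5]
  end.

Lemma small_placement_ok :
  all (fun n => all (fun x => ((n == 5) && (x == 2)) ||
        let f := nth 0 (small_placement n x) in placementb n f && anchoredb n x f)
      (iota 0 n)) (iota 4 4).
Proof. by vm_compute. Qed.

Lemma small_anchored_placement n x :
  4 <= n < 8 -> x < n -> ~ (n = 5 /\ x = 2) ->
  exists f, placement n f /\ anchored n x f.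
Proof.
move=> n_small x_lt not_bad; move/allP: small_placement_ok => /(_ n).
rewrite mem_iota n_small => /(_ isT) /allP /(_ x); rewrite mem_iota x_lt => /(_ isT).
case/orP => [/andP[/eqP n5 /eqP x2] | /andP[/placementbP Pf /anchoredbP Af]].
  by case: not_bad.
by exists (nth 0 (small_placement n x)).
Qed.

(* Main combinatorial statement, by strong induction on n, splitting off a
   block of size 4 at the end near x, or recursing on the first n-4 vertices
   when x is far from both ends. *)
Lemma anchored_placement_exists n x :
  4 <= n -> x < n -> ~ (n = 5 /\ x = 2) -> exists f, placement n f /\ anchored n x f.
Proof.
elim/ltn_ind: n x => n IH x n4 x_lt not_bad.
have [n_small|n_big] := ltnP n 8; first by apply: small_anchored_placement; rewrite ?n4.
have block y : y < 4 -> exists f, placement 4 f /\ anchored 4 y f.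
  by move=> y4; apply: small_anchored_placement => //; lia.
have [k n_eq] : exists k, n = k + 4 by exists (n - 4); lia.
subst n; have k_pos : 0 < k by lia.
have [g [Pg _]] : exists g, placement k g /\ anchored k 0 g by apply: (IH); lia.
have [x4|x_ge4] := ltnP x 4.
  have [f [Pf Af]] := block x x4.
  exists (catf 4 f g); rewrite addnC.
  by split; [exact: cat_placement (ltn0Sn 3) k_pos Pf Pg | exact: cat_anchored_l k_pos Pg Af].
have [x_mid|x_end] := ltnP x k.
  have [f [Pf Af]] : exists f, placement k f /\ anchored k x f by apply: (IH); lia.
  have [h [Ph _]] := block 0 isT.
  by exists (catf k f h); split; [exact: cat_placement k_pos (ltn0Sn 3) Pf Ph | exact: cat_anchored_l].
have [f [Pf Af]] := block (x - k) ltac:(lia).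
exists (catf k g f); split; first exact: cat_placement k_pos (ltn0Sn 3) Pg Pf.
by have := cat_anchored_r k_pos Pg Af; rewrite subnKC // ltnW.
Qed.

Lemma padjE n (a b : 'I_n) : padj a b -> b = a.+1 :> nat \/ a = b.+1 :> nat.
Proof. by rewrite /padj /pdist => /eqP; lia. Qed.

(* The leaves of P_n are its end vertices: inner vertices have 2 neighbours. *)
Lemma pdeg1_end n (y : 'I_n) : pdeg y = 1 -> y = 0 :> nat \/ y = n.-1 :> nat.
Proof.
move=> deg1; have [y0|y_pos] := posnP y; first by left.
have [y_last|y_inner] := eqVneq (y : nat) n.-1; first by right.
have y_lt := ltn_ord y.
have lo : y.-1 < n by lia.
have hi : y.+1 < n by lia.
suff : 1 < pdeg y by rewrite deg1.
apply/card_gt1P; exists (Ordinal lo), (Ordinal hi); rewrite !inE /padj /pdist /=.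
by split; [lia | lia | apply/eqP => /(congr1 val) /=; lia].
Qed.

Section PlacementPerm.
Variables (n : nat) (f : nat -> nat).
Hypothesis Pf : placement n f.

Lemma perm_of_placement : exists s : {perm 'I_n}, forall i : 'I_n, s i = f i :> nat.
Proof.
pose fo (i : 'I_n) : 'I_n := Ordinal (placement_range Pf (ltn_ord i)).
have fo_inj : injective fo.
  move=> i j /(congr1 val) /= fij; apply: val_inj.
  exact: placement_inj Pf _ _ (ltn_ord i) (ltn_ord j) fij.
by exists (perm fo_inj) => i; rewrite permE.
Qed.

Variable s : {perm 'I_n}.
Hypothesis sE : forall i : 'I_n, s i = f i :> nat.

Lemma pdist_perm (a b : 'I_n) : pdist (s a) (s b) = ndist (f a) (f b).
Proof. by rewrite /pdist !sE. Qed.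

Lemma perm_placement_edge (a b : 'I_n) :
  padj a b -> pdist (s a) (s b) <> 1 /\ pdist (s a) (s b) <= 5.
Proof.
rewrite pdist_perm /ndist; case/padjE => ab.
  by have := placement_edge Pf (i := a); rewrite -ab /ndist => /(_ (ltn_ord b)); lia.
by have := placement_edge Pf (i := b); rewrite -ab /ndist => /(_ (ltn_ord a)); lia.
Qed.

Lemma perm_placement_leaf (y : 'I_n) : pdeg y = 1 -> pdist y (s y) <= 2.
Proof.
rewrite /pdist sE; case/pdeg1_end => ->; first exact: placement_first Pf.
exact: placement_last Pf.
Qed.

End PlacementPerm.

Theorem theorem3p2 (n : nat) (x : 'I_n) :
  4 <= n -> ~ bad_vertex x ->
  exists s : {perm 'I_n}, good_path_2placement x s.
Proof.
move=> n4 not_bad.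
have [f [Pf [_ f_x f_nbrs]]] := anchored_placement_exists n4 (ltn_ord x) not_bad.
have [s sE] := perm_of_placement Pf.
have edge := perm_placement_edge Pf sE.
exists s; split.
- by move=> a; apply/eqP => /(congr1 val) /=; rewrite sE; apply: placement_fpf Pf _ (ltn_ord a).
- by move=> a b /edge [/eqP].
- by move=> a b /edge [].
- by rewrite /pdist sE.
- move=> y /orP [xy | /eqP deg1]; last exact: (perm_placement_leaf Pf sE deg1).
  by rewrite /pdist sE; apply: f_nbrs (ltn_ord y) _; apply/eqP.
Qed.
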